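(* Let $U=\{\xi_1,\dots,\xi_p\}\subset\mathbb{R}^k$ be finite, and for $j\in\Lambda=\{1,\dots,m\}$ let $f_j:\mathbb{R}^n\times U\to\mathbb{R}$ be such that $x\mapsto f_j(x,\xi_i)$ is continuously differentiable and convex for each $i\in\bar\Lambda=\{1,\dots,p\}$. Let $\{x^k\}$ be the sequence of iterates generated by Algorithm 1 (described in the context). If $\tilde x\in\mathbb{R}^n$ and $k$ is an index such that $f_j(\tilde x,\xi_i)\le f_j(x^k,\xi_i)$ for all $i\in\bar\Lambda$, $j\in\Lambda$, then $$\|\tilde x-x^{k+1}\|^2\le \|\tilde x-x^k\|^2+\|x^k-x^{k+1}\|^2 .$$
   Context: Let $\Phi_j(x)=\max_{i\in\bar\Lambda} f_j(x,\xi_i)$ and $\Phi=(\Phi_1,\dots,\Phi_m)$. For $x\in\mathbb{R}^n$, let $\vartheta_x(t)=\max_{j\in\Lambda}\max_{i\in\bar\Lambda}\{f_j(x,\xi_i)+\nabla f_j(x,\xi_i)^Tt-\Phi_j(x)\}$, let $t(x)$ be the unique minimizer over $t\in\mathbb{R}^n$ of $\vartheta_x(t)+\frac12\|t\|^2$, and $\Theta(x)=\vartheta_x(t(x))+\frac12\|t(x)\|^2$ its optimal value. Algorithm 1: choose $\epsilon>0$, $\beta\in(0,1)$, $x^0\in\mathbb{R}^n$, set $k=0$. Step 2: compute $t^k=t(x^k)$ and $\Theta(x^k)$. Step 3: if $|\Theta(x^k)|<\epsilon$, stop. Step 4: let $\alpha_k$ be the largest $\alpha\in\{1/2^r:r=1,2,3,\dots\}$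 such that for all $j\in\Lambda$, $\Phi_j(x^k+\alpha t^k)\le\Phi_j(x^k)+\alpha\beta\big(\max_{i\in\bar\Lambda}\{f_j(x^k,\xi_i)+\nabla f_j(x^k,\xi_i)^Tt^k\}-\Phi_j(x^k)\big)$. Step 5: set $x^{k+1}=x^k+\alpha_kt^k$, $k:=k+1$, go to Step 2. Gradients are with respect to $x$. *)

From HB Require Import structures.
From mathcomp Require Import all_boot all_order all_algebra.
From mathcomp Require Import all_classical all_reals all_analysis.
Set Implicit Arguments. Unset Strict Implicit. Unset Printing Implicit Defensive.
Import Order.TTheory GRing.Theory Num.Theory.
Import numFieldNormedType.Exports.
Local Open Scope ring_scope.

Section Alg1.
Variables (R : realType) (n m p : nat).
(* f j i x  stands for  f_j(x, xi_i); j ranges over Lambda = {1..m+1} (as 'I_m.+1),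
   i over bar Lambda = {1..p+1} (as 'I_p.+1). *)
Variable f : 'I_m.+1 -> 'I_p.+1 -> 'rV[R]_n -> R.
(* g j i x is the gradient of x |-> f j i x at x. *)
Variable g : 'I_m.+1 -> 'I_p.+1 -> 'rV[R]_n -> 'rV[R]_n.

Definition dotv (u v : 'rV[R]_n) : R := \sum_(l < n) u 0 l * v 0 l.
Definition sqnorm (u : 'rV[R]_n) : R := dotv u u.

Definition Phi (j : 'I_m.+1) (x : 'rV[R]_n) : R :=
  \big[Num.max/f j ord0 x]_(i < p.+1) f j i x.

Definition linz (j : 'I_m.+1) (i : 'I_p.+1) (x t : 'rV[R]_n) : R :=
  f j i x + dotv (g j i x) t.

Definition maxlin (j : 'I_m.+1) (x t : 'rV[R]_n) : R :=
  \big[Num.max/linz j ord0 x t]_(i < p.+1) linz j i x t.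

Definition vartheta (x t : 'rV[R]_n) : R :=
  \big[Num.max/(maxlin ord0 x t - Phi ord0 x)]_(j < m.+1)
    \big[Num.max/(linz j ord0 x t - Phi j x)]_(i < p.+1) (linz j i x t - Phi j x).

Definition subobj (x t : 'rV[R]_n) : R := vartheta x t + 2^-1 * sqnorm t.

Definition is_minimizer (x t : 'rV[R]_n) : Prop :=
  forall s : 'rV[R]_n, subobj x t <= subobj x s.

Variable tfun : 'rV[R]_n -> 'rV[R]_n.

Definition Theta (x : 'rV[R]_n) : R := subobj x (tfun x).

Definition armijo (beta : R) (x t : 'rV[R]_n) (a : R) : Prop :=
  forall j : 'I_m.+1,
    Phi j (x + a *: t) <= Phi j x + a * beta * (maxlin j x t - Phi j x).

(* Step k of Algorithm 1 is executed (no stop at Step 3), with step size alpha k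
   the largest element of {1/2^r : r >= 1} satisfying Armijo, and
   x (k+1) = x k + alpha k t^k, where t^k = t(x^k). *)
Definition alg1_step (eps beta : R) (x : nat -> 'rV[R]_n) (alpha : nat -> R)
    (k : nat) : Prop :=
  [/\ ~ (`|Theta (x k)| < eps),
      exists2 r : nat, (1 <= r)%N & alpha k = (2 ^+ r)^-1,
      armijo beta (x k) (tfun (x k)) (alpha k),
      (forall r : nat, (1 <= r)%N ->
          armijo beta (x k) (tfun (x k)) ((2 ^+ r)^-1) -> (2 ^+ r)^-1 <= alpha k)
    & x k.+1 = x k + alpha k *: tfun (x k)].

End Alg1.

Definition convex_fun (R : realType) (n : nat) (h : 'rV[R]_n -> R) : Prop :=
  forall (x y : 'rV[R]_n) (a : R), 0 <= a -> a <= 1 ->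
    h (a *: x + (1 - a) *: y) <= a * h x + (1 - a) * h y.

(* Put d = x~ - x^k.  By convexity, grad f_j(x^k, xi_i) . d <= f_j(x~, xi_i) - f_j(x^k, xi_i) <= 0,
   so moving t^k in the direction d lowers every linearization, hence does not increase
   vartheta_{x^k}.  Since t^k minimizes vartheta_{x^k} + 1/2 ||.||^2, comparing with
   t^k + e d for small e > 0 forces t^k . d >= 0.  Expanding
   ||d - alpha_k t^k||^2 = ||d||^2 - 2 alpha_k t^k . d + ||alpha_k t^k||^2 concludes. *)
From HB Require Import structures.
From mathcomp Require Import all_boot all_order all_algebra.
From mathcomp Require Import all_classical all_reals all_analysis.
From mathcomp Require Import ring lra.
Set Implicit Arguments. Unset Strict Implicit. Unset Printing Implicit Defensive.
Import Order.TTheory GRing.Theory Num.Theory.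
Import numFieldNormedType.Exports.
Local Open Scope ring_scope.

Lemma le_bigmax_seed (disp : Order.disp_t) (T : orderType disp) (I : Type)
    (r : seq I) (P : pred I) (x y : T) (F G : I -> T) :
  (x <= y)%O -> (forall i, P i -> (F i <= G i)%O) ->
  (\big[Order.max/x]_(i <- r | P i) F i <= \big[Order.max/y]_(i <- r | P i) G i)%O.
Proof.
by move=> le_xy le_FG; apply: (big_ind2 (fun a b => a <= b)%O) => // *; exact: le_max2.
Qed.

Lemma ge0_affine (R : realFieldType) (a b : R) :
  (forall e, 0 < e -> 0 <= a + e * b) -> 0 <= a.
Proof.
move=> affine_ge0; rewrite leNgt; apply/negP => a_lt0.
have [b_le0 | b_gt0] := lerP b 0.
  by have := affine_ge0 1 ltr01; lra.
have e_gt0 : 0 < - a / (2 * b) by rewrite divr_gt0 ?oppr_gt0 ?mulr_gt0.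
have := affine_ge0 _ e_gt0.
have -> : - a / (2 * b) * b = - a / 2 by field; rewrite gt_eqF.
lra.
Qed.

Section Euclid.
Variables (R : realType) (n : nat).
Implicit Types (u v w : 'rV[R]_n) (a : R).

Lemma dotvC u v : dotv u v = dotv v u.
Proof. by apply: eq_bigr => l _; rewrite mulrC. Qed.

Lemma dotvDZr u v w a : dotv u (v + a *: w) = dotv u v + a * dotv u w.
Proof. by rewrite /dotv mulr_sumr -big_split; apply: eq_bigr => l _ /=; rewrite !mxE; ring. Qed.

Lemma sqnormDZ u v a :
  sqnorm (u + a *: v) = sqnorm u + 2 * a * dotv u v + a ^+ 2 * sqnorm v.
Proof.
rewrite /sqnorm /dotv !mulr_sumr -!big_split.
by apply: eq_bigr => l _ /=; rewrite !mxE; ring.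
Qed.

Lemma sqnormZ u a : sqnorm (a *: u) = a ^+ 2 * sqnorm u.
Proof. by rewrite /sqnorm /dotv mulr_sumr; apply: eq_bigr => l _ /=; rewrite !mxE; ring. Qed.

Lemma sqnormN u : sqnorm (- u) = sqnorm u.
Proof. by apply: eq_bigr => l _; rewrite !mxE mulrNN. Qed.

Lemma sqnormBZ u v a :
  sqnorm (u - a *: v) = sqnorm u - 2 * a * dotv u v + a ^+ 2 * sqnorm v.
Proof. by rewrite -scaleNr sqnormDZ sqrrN mulrN mulNr. Qed.

Local Open Scope classical_set_scope.

Lemma convex_diff_le (h : 'rV[R]_n -> R) x d :
  differentiable h x -> convex_fun h -> 'd h x d <= h (x + d) - h x.
Proof.
move=> dh convex_h; rewrite -deriveE //.
have quotient_cvg : (fun a : R => a^-1 *: (h (a *: d + x) - h x)) @ 0^'+ --> 'D_d h x.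
  move=> A /(diff_derivable dh) /nbhs_ballP [_ /posnumP[e] xe_A].
  by exists e%:num => //= y xe_y /gt_eqF/negbT/xe_A; exact.
apply: (cvgr_to_le quotient_cvg); exists 1 => //= a.
rewrite /ball /= sub0r normrN => a_lt1 a_gt0.
rewrite gtr0_norm // in a_lt1.
have := convex_h (x + d) x a (ltW a_gt0) (ltW a_lt1).
have -> : a *: (x + d) + (1 - a) *: x = a *: d + x.
  by rewrite scalerDr scalerBl scale1r addrC addrA subrK addrC.
move=> le_chord; rewrite -[_ *: _]/(_ * _) ler_pdivrMl // lerBlDr.
by rewrite (_ : _ * _ + _ = a * h (x + d) + (1 - a) * h x) //; ring.
Qed.

Lemma convex_gradient_le (h : 'rV[R]_n -> R) (grad : 'rV[R]_n) x y :
  differentiable h x -> ('d h x : 'rV[R]_n -> R) = dotv grad -> convex_fun h ->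
  dotv grad (y - x) <= h y - h x.
Proof.
move=> dh dhE convex_h.
by have := convex_diff_le (y - x) dh convex_h; rewrite dhE addrCA subrr addr0.
Qed.

End Euclid.

Section Subproblem.
Variables (R : realType) (n m p : nat).
Variable f : 'I_m.+1 -> 'I_p.+1 -> 'rV[R]_n -> R.
Variable g : 'I_m.+1 -> 'I_p.+1 -> 'rV[R]_n -> 'rV[R]_n.

Lemma le_vartheta x s t :
  (forall j i, linz f g j i x s <= linz f g j i x t) ->
  vartheta f g x s <= vartheta f g x t.
Proof.
move=> le_st; apply: le_bigmax_seed => [|j _].
  by rewrite lerD2r; apply: le_bigmax_seed => *; exact: le_st.
by apply: le_bigmax_seed => *; rewrite lerD2r; exact: le_st.
Qed.

Lemma minimizer_dotv_ge0 x t d :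
  is_minimizer f g x t ->
  (forall e, 0 < e -> vartheta f g x (t + e *: d) <= vartheta f g x t) ->
  0 <= dotv t d.
Proof.
move=> t_min descent; apply: (@ge0_affine _ _ (2^-1 * sqnorm d)) => e e_gt0.
move: (t_min (t + e *: d)) (descent e e_gt0).
rewrite /subobj sqnormDZ => le_subobj le_vartheta_e.
have : 0 <= e * (dotv t d + e * (2^-1 * sqnorm d)) by nra.
by rewrite pmulr_rge0.
Qed.

Hypothesis f_grad : forall j i x, differentiable (f j i) x /\
  ('d (f j i) x : 'rV[R]_n -> R) = dotv (g j i x).
Hypothesis f_convex : forall j i, convex_fun (f j i).

Lemma linz_descent x xt t e j i :
  (forall j i, f j i xt <= f j i x) -> 0 <= e ->
  linz f g j i x (t + e *: (xt - x)) <= linz f g j i x t.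
Proof.
move=> f_le e_ge0; rewrite /linz dotvDZr addrA gerDl.
have [dfx dfxE] := f_grad j i x.
have grad_le := convex_gradient_le xt dfx dfxE (f_convex j i).
apply: mulr_ge0_le0 e_ge0 (le_trans grad_le _).
by rewrite subr_le0.
Qed.

End Subproblem.

Theorem lemma4p3 (R : realType) (n m p : nat)
  (f : 'I_m.+1 -> 'I_p.+1 -> 'rV[R]_n -> R)
  (g : 'I_m.+1 -> 'I_p.+1 -> 'rV[R]_n -> 'rV[R]_n)
  (* each x |-> f_j(x, xi_i) is continuously differentiable with gradient g j i *)
  (hdiff : forall j i (x : 'rV[R]_n), differentiable (f j i) x /\
      ('d (f j i) x : 'rV[R]_n -> R) = (fun t => dotv (g j i x) t))
  (hcont : forall j i, continuous (g j i))
  (* and convex *)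
  (hconv : forall j i, convex_fun (f j i))
  (* t(x) is the (unique) minimizer of vartheta_x(t) + 1/2 ||t||^2 *)
  (tfun : 'rV[R]_n -> 'rV[R]_n)
  (htmin : forall x, is_minimizer f g x (tfun x))
  (* parameters of Algorithm 1 *)
  (eps beta : R) (heps : 0 < eps) (hbeta0 : 0 < beta) (hbeta1 : beta < 1)
  (* iterates x^0, x^1, ... and step sizes generated by Algorithm 1 *)
  (x : nat -> 'rV[R]_n) (alpha : nat -> R) (k : nat)
  (hsteps : forall l : nat, (l <= k)%N -> alg1_step f g tfun eps beta x alpha l)
  (xt : 'rV[R]_n)
  (hle : forall (j : 'I_m.+1) (i : 'I_p.+1), f j i xt <= f j i (x k)) :
  sqnorm (xt - x k.+1) <= sqnorm (xt - x k) + sqnorm (x k - x k.+1).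
Proof.
have [_ [r _ alphaE] _ _ ->] := hsteps k (leqnn k).
have alpha_ge0 : 0 <= alpha k by rewrite alphaE invr_ge0 exprn_ge0.
set t := tfun (x k); set d := xt - x k.
have td_ge0 : 0 <= dotv t d.
  apply: minimizer_dotv_ge0 (htmin _) _ => e e_gt0.
  by apply: le_vartheta => j i; apply: linz_descent => //; exact: ltW.
rewrite opprD !addrA -/d subrr add0r sqnormBZ sqnormN sqnormZ dotvC.
have := mulr_ge0 alpha_ge0 td_ge0; lra.
Qed.
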